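(* Let $\mathcal{G}_1$ be a two-terminal series-parallel graph with source $s_1$ and sink $t_1$, and $\mathcal{G}_2$ one with source $s_2$ and sink $t_2$. For a TTSP graph $\mathcal{G}$ with source $s$ and sink $t$, define $$\big(\mathcal{H}_2^{\mathcal{G}}\big)^2=-\tfrac12\mathrm{Tr}\big[e_t^T A^{-1}e_t\big],$$ where $A=-L_D$ and $L_D$ is the Dirichlet Laplacian of $\mathcal{G}$ grounded at $s$. Then $$\big(\mathcal{H}_2^{\mathcal{G}_1\odot\mathcal{G}_2}\big)^2=\big(\mathcal{H}_2^{\mathcal{G}_1}\big)^2+\big(\mathcal{H}_2^{\mathcal{G}_2}\big)^2,\qquad \big(\mathcal{H}_2^{\mathcal{G}_1\oslash\mathcal{G}_2}\big)^2=\big(\mathcal{H}_2^{\mathcal{G}_1}\big)^2:\big(\mathcal{H}_2^{\mathcal{G}_2}\big)^2.$$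
   Context: Graphs are undirected with positive edge weights (conductances); multiple edges are allowed. Two-terminal series-parallel (TTSP) graphs are defined recursively. A single edge with designated source and sink (a 1-path) is TTSP. If $\mathcal{G}_1,\mathcal{G}_2$ are TTSP with sources $s_1,s_2$ and sinks $t_1,t_2$, then: - the series join $\mathcal{G}_1\odot\mathcal{G}_2$ identifies $t_1$ with $s_2$ and has source $s_1$, sink $t_2$; it is TTSP; - the parallel join $\mathcal{G}_1\oslash\mathcal{G}_2$ identifies $s_1$ with $s_2$ (the source) and $t_1$ with $t_2$ (the sink); it is TTSP. The Dirichlet Laplacian grounded at $s$ is the weighted graph Laplacian with the row and column of $s$ deleted. Thus $\big(\mathcal{H}_2^{\mathcal{G}}\big)^2$ is the squared $\mathcal{H}_2$ norm of the single-leader consensus system $\dot x=Ax+e_tu$, $y=x$, with the source as grounded leader and the sink as input node. For $a,b>0$, the parallel sum is $a:b=\frac{ab}{a+b}=(a^{-1}+b^{-1})^{-1}$. *)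

From mathcomp Require Import all_boot all_order all_algebra.
Set Implicit Arguments. Unset Strict Implicit. Unset Printing Implicit Defensive.
Import Order.TTheory GRing.Theory Num.Theory.
Local Open Scope ring_scope.

(* A weighted multigraph with vertices 0, ..., nv-1 (as natural numbers),
   a designated source and sink, and a list of edges (u, v, weight). *)
Record tgraph (R : Type) := TGraph {
  nv : nat;
  src : nat;
  snk : nat;
  edges : seq (nat * nat * R)
}.

Section Defs.
Variable R : realFieldType.

(* weighted Laplacian entry L(u,v), vertices as nats; self-loops ignored *)
Definition lap (E : seq (nat * nat * R)) (u v : nat) : R :=
  if u == v then \sum_(e <- E | (e.1.1 == u) (+) (e.1.2 == u)) e.2
  else - \sum_(e <- E | ((e.1.1 == u) && (e.1.2 == v))
                         || ((e.1.1 == v) && (e.1.2 == u))) e.2.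

(* Dirichlet Laplacian grounded at the source: delete row/column src.
   Remaining vertices are indexed by i : 'I_(nv-1) via i |-> bump src i. *)
Definition dirLap (G : tgraph R) : 'M[R]_((nv G).-1) :=
  \matrix_(i, j) lap (edges G) (bump (src G) i) (bump (src G) j).

Definition e_sink (G : tgraph R) : 'cV[R]_((nv G).-1) :=
  \col_i (bump (src G) i == snk G)%:R.

Definition H2sq (G : tgraph R) : R :=
  - (2%:R)^-1 * \tr ((e_sink G)^T *m invmx (- dirLap G) *m e_sink G).

Definition edge_graph (w : R) : tgraph R := TGraph 2 0 1 [:: (0%N, 1%N, w)].

Definition map_edges (f : nat -> nat) (E : seq (nat * nat * R)) :=
  [seq (f e.1.1, f e.1.2, e.2) | e <- E].

(* series join: G2's source identified with G1's sink; other vertices of G2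
   relabelled after those of G1. *)
Definition ser_map (G1 G2 : tgraph R) (v : nat) : nat :=
  if v == src G2 then snk G1 else (nv G1 + v - (src G2 < v))%N.

Definition series (G1 G2 : tgraph R) : tgraph R :=
  TGraph (nv G1 + nv G2 - 1) (src G1) (ser_map G1 G2 (snk G2))
         (edges G1 ++ map_edges (ser_map G1 G2) (edges G2)).

(* parallel join: sources identified, sinks identified *)
Definition par_map (G1 G2 : tgraph R) (v : nat) : nat :=
  if v == src G2 then src G1 else if v == snk G2 then snk G1
  else (nv G1 + v - (src G2 < v) - (snk G2 < v))%N.

Definition parallel (G1 G2 : tgraph R) : tgraph R :=
  TGraph (nv G1 + nv G2 - 2) (src G1) (snk G1)
         (edges G1 ++ map_edges (par_map G1 G2) (edges G2)).

Inductive ttsp : tgraph R -> Prop :=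
  | ttsp_edge w : 0 < w -> ttsp (edge_graph w)
  | ttsp_series G1 G2 : ttsp G1 -> ttsp G2 -> ttsp (series G1 G2)
  | ttsp_parallel G1 G2 : ttsp G1 -> ttsp G2 -> ttsp (parallel G1 G2).

Definition psum (a b : R) : R := a * b / (a + b).

End Defs.

(* Let x be the potential of a unit current entering at the sink t and leaving
   at the grounded source, so that L_D x = e_t.  Then
   -1/2 e_t^T A^{-1} e_t = x(t) / 2, half the effective resistance between s
   and t.  Effective resistances add in series and combine by the parallel sum
   in parallel: gluing the unit potentials of G1 and G2 (shifted by r1 in series,
   rescaled by the current split in parallel) gives the unit potential of the
   join.  Invertibility of L_D comes from uniqueness for the Dirichlet problem,
   which also propagates through both joins. *)

From mathcomp Require Import all_boot all_order all_algebra.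
From mathcomp Require Import zify ring.
Import Order.TTheory GRing.Theory Num.Theory.
Set Implicit Arguments. Unset Strict Implicit. Unset Printing Implicit Defensive.
Local Open Scope ring_scope.

Section Flow.
Variable R : realFieldType.
Implicit Types (E : seq (nat * nat * R)) (y z : nat -> R) (f : nat -> nat).

Definition edges_lt E n := forall e, e \in E -> (e.1.1 < n)%N /\ (e.1.2 < n)%N.

(* The current leaving [v] under the potential [y]: row [v] of the Laplacian
   applied to [y] (see [lap_flow]). *)
Definition flow E y v : R :=
  \sum_(e <- E) ((e.1.1 == v)%:R * e.2 * (y v - y e.1.2)
                + (e.1.2 == v)%:R * e.2 * (y v - y e.1.1)).

Lemma flow_cat E1 E2 y v : flow (E1 ++ E2) y v = flow E1 y v + flow E2 y v.
Proof. by rewrite /flow big_cat. Qed.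

Lemma flow_lin E y z a b c v :
  flow E (fun u => a * y u + b * z u + c) v = a * flow E y v + b * flow E z v.
Proof.
rewrite /flow; elim: E => [|e E IH]; first by rewrite !big_nil; ring.
by rewrite !big_cons IH; ring.
Qed.

Lemma eq_in_flow E y z n v : edges_lt E n -> (v < n)%N ->
  (forall u, (u < n)%N -> y u = z u) -> flow E y v = flow E z v.
Proof.
move=> En vn yz; apply: eq_big_seq => e /En[e1 e2].
by rewrite !yz.
Qed.

Lemma flow_affine_in E y z n a c v : edges_lt E n -> (v < n)%N ->
  (forall u, (u < n)%N -> y u = a * z u + c) -> flow E y v = a * flow E z v.
Proof.
move=> En vn yz; rewrite (@eq_in_flow _ _ (fun u => a * z u + 0 * z u + c) n) //.
  by rewrite flow_lin mul0r addr0.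
by move=> u un; rewrite yz // mul0r addr0.
Qed.

Lemma flow_isolated E y v :
  (forall e, e \in E -> e.1.1 != v /\ e.1.2 != v) -> flow E y v = 0.
Proof.
move=> Ev; rewrite /flow big1_seq // => e /andP[_ /Ev[/negbTE-> /negbTE->]].
by rewrite !mul0r addr0.
Qed.

Lemma flow_out_of_range E y n v : edges_lt E n -> (n <= v)%N -> flow E y v = 0.
Proof.
move=> En nv; apply: flow_isolated => e /En[e1 e2].
by split; apply/eqP => ev; move: e1 e2; rewrite ev; lia.
Qed.

Lemma flow_map E f y n v : edges_lt E n -> {in gtn n &, injective f} ->
  (v < n)%N -> flow (map_edges f E) y (f v) = flow E (y \o f) v.
Proof.
move=> En f_inj vn; rewrite /flow /map_edges big_map.
apply: eq_big_seq => e /En[e1 e2] /=.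
by rewrite !(inj_in_eq f_inj) ?inE.
Qed.

Lemma flow_map_nonimage E f y n v : edges_lt E n ->
  (forall a, (a < n)%N -> f a != v) -> flow (map_edges f E) y v = 0.
Proof.
move=> En fv; apply: flow_isolated => e /mapP[e' /En[e1 e2] ->] /=.
by split; apply: fv.
Qed.

Section Glue.
Variables (E1 E2 : seq (nat * nat * R)) (n1 n2 : nat) (f : nat -> nat).
Hypotheses (E1n1 : edges_lt E1 n1) (E2n2 : edges_lt E2 n2).
Hypothesis f_inj : {in gtn n2 &, injective f}.

Lemma edges_lt_glue N : (n1 <= N)%N -> (forall a, (a < n2)%N -> (f a < N)%N) ->
  edges_lt (E1 ++ map_edges f E2) N.
Proof.
move=> n1N fN e; rewrite mem_cat => /orP[/E1n1[e1 e2]|/mapP[e' /E2n2[e1 e2] ->]].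
  by split; lia.
by split; apply: fN.
Qed.

Lemma flow_glue_l y v : (forall a, (a < n2)%N -> f a != v) ->
  flow (E1 ++ map_edges f E2) y v = flow E1 y v.
Proof. by move=> fv; rewrite flow_cat (flow_map_nonimage _ E2n2 fv) addr0. Qed.

Lemma flow_glue y w v : f w = v -> (w < n2)%N ->
  flow (E1 ++ map_edges f E2) y v = flow E1 y v + flow E2 (y \o f) w.
Proof. by move=> <- wn; rewrite flow_cat (flow_map _ E2n2 f_inj). Qed.

Lemma flow_glue_r y w : (w < n2)%N -> (n1 <= f w)%N ->
  flow (E1 ++ map_edges f E2) y (f w) = flow E2 (y \o f) w.
Proof.
by move=> wn fw; rewrite (flow_glue _ erefl wn) (flow_out_of_range _ E1n1 fw) add0r.
Qed.

End Glue.

End Flow.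

Section Laplacian.
Variable R : realFieldType.
Implicit Types (E : seq (nat * nat * R)) (y : nat -> R).

Lemma sum_indicator n (F : 'I_n -> R) (j : 'I_n) :
  \sum_(i < n) ((i : nat) == j)%:R * F i = F j.
Proof.
under eq_bigr => i _ do rewrite mulr_natl mulrb.
by rewrite -big_mkcond big_pred1_eq.
Qed.

Lemma sum_indicator_nat n y c : (c < n)%N ->
  \sum_(i < n) ((i : nat) == c)%:R * y i = y c.
Proof. by move=> cn; rewrite (sum_indicator (fun i : 'I_n => y i) (Ordinal cn)). Qed.

Lemma lap_cons e E v u : lap (e :: E) v u =
  (e.1.1 == v)%:R * e.2 * ((u == v)%:R - (u == e.1.2)%:R)
  + (e.1.2 == v)%:R * e.2 * ((u == v)%:R - (u == e.1.1)%:R) + lap E v u.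
Proof.
case: e => [[a b] w] /=; rewrite /lap !big_cons /=.
have [->|uv] := eqVneq u v; rewrite ?eqxx /=.
  by rewrite (eq_sym v a) (eq_sym v b); case: (a == v); case: (b == v) => /=; ring.
rewrite (eq_sym u b) (eq_sym u a).
have [->|_] := eqVneq a v; have [->|_] := eqVneq b v; rewrite ?(negbTE uv) ?eqxx /=;
  rewrite ?[v == u]eq_sym ?(negbTE uv) /=; case: (a == u); case: (b == u) => /=; ring.
Qed.

Lemma lap_flow E y n v : edges_lt E n -> (v < n)%N ->
  \sum_(u < n) lap E v u * y u = flow E y v.
Proof.
elim: E => [|e E IH] En vn.
  rewrite /flow big_nil big1 // => u _.
  by rewrite /lap !big_nil; case: eqP; rewrite ?oppr0 mul0r.
have [e1 e2] := En e (mem_head _ _).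
have {}IH : \sum_(u < n) lap E v u * y u = flow E y v.
  by apply: IH => // e' e'E; apply: En; rewrite in_cons e'E orbT.
rewrite /flow big_cons -/(flow E y v) -IH.
under eq_bigr => u _ do rewrite lap_cons !mulrDl !mulrBr !mulrBl -!mulrA.
by rewrite !big_split !sumrN /= -!mulr_sumr !sum_indicator_nat //; ring.
Qed.

Lemma lap_sym E u v : lap E u v = lap E v u.
Proof.
rewrite /lap eq_sym; case: eqVneq => [->//|_]; congr (- _); apply: eq_bigl => e.
by rewrite orbC.
Qed.

End Laplacian.

Section Potential.
Variable R : realFieldType.
Implicit Types (G : tgraph R) (x y : nat -> R).

Definition harmonic G y := forall v, (0 < v)%N -> (v < nv G)%N -> v != snk G ->
  flow (edges G) y v = 0.

Record wf_tgraph G : Prop := WfTgraph {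
  src_eq0 : src G = 0%N;
  snk_gt0 : (0 < snk G)%N;
  snk_lt : (snk G < nv G)%N;
  edges_lt_nv : edges_lt (edges G) (nv G);
  (* uniqueness for the Dirichlet problem; it makes [dirLap G] invertible *)
  harmonic_eq0 : forall y, y 0%N = 0 -> y (snk G) = 0 -> harmonic G y ->
    forall v, (v < nv G)%N -> y v = 0 }.

Record unit_potential G x (r : R) : Prop := UnitPotential {
  potential_src : x 0%N = 0;
  potential_harmonic : harmonic G x;
  potential_snk_flow : flow (edges G) x (snk G) = 1;
  potential_src_flow : flow (edges G) x 0%N = -1;
  potential_snk : x (snk G) = r }.

Definition eff_resistance G r := wf_tgraph G /\ exists x, unit_potential G x r.

Lemma nv_gt0 G : wf_tgraph G -> (0 < nv G)%N.
Proof. by move=> wfG; apply: leq_ltn_trans (snk_lt wfG). Qed.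

Lemma nv_predK G : wf_tgraph G -> (nv G).-1.+1 = nv G.
Proof. by move/nv_gt0/prednK. Qed.

Section HarmonicFunctions.
Variables (G : tgraph R) (x : nat -> R) (r : R).
Hypotheses (wfG : wf_tgraph G) (xG : unit_potential G x r) (r_neq0 : r != 0).

Lemma harmonicE y : harmonic G y -> forall v, (v < nv G)%N ->
  y v = (y (snk G) - y 0%N) / r * x v + y 0%N.
Proof.
move=> yG v vn; set c := (y (snk G) - y 0%N) / r.
suff z0 : 1 * y v + (- c) * x v + (- y 0%N) = 0.
  by apply/eqP; rewrite -subr_eq0 -z0; apply/eqP; ring.
apply: (harmonic_eq0 wfG (y := fun u => 1 * y u + (- c) * x u + (- y 0%N))) => //.
- by rewrite (potential_src xG); ring.
- by rewrite (potential_snk xG) /c; field.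
- by move=> u u0 un ut; rewrite flow_lin yG // (potential_harmonic xG) //; ring.
Qed.

Lemma harmonic_kernel y : y 0%N = 0 ->
  (forall v, (0 < v)%N -> (v < nv G)%N -> flow (edges G) y v = 0) ->
  forall v, (v < nv G)%N -> y v = 0.
Proof.
move=> y0 yG.
have yE := harmonicE (fun v v0 vn _ => yG v v0 vn).
have ysnk : y (snk G) = 0.
  have := yG _ (snk_gt0 wfG) (snk_lt wfG).
  rewrite (flow_affine_in (edges_lt_nv wfG) (snk_lt wfG) yE) (potential_snk_flow xG).
  rewrite y0 subr0 mulr1 => /eqP.
  by rewrite mulf_eq0 invr_eq0 (negbTE r_neq0) orbF => /eqP.
by move=> v vn; rewrite yE // y0 ysnk subrr mul0r mul0r addr0.
Qed.

Lemma dirLap_col y : y 0%N = 0 ->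
  dirLap G *m \col_j y j.+1 = \col_i flow (edges G) y i.+1.
Proof.
move=> y0; have En : edges_lt (edges G) (nv G).-1.+1.
  by rewrite (nv_predK wfG); exact: edges_lt_nv.
apply/colP => i; rewrite !mxE -(lap_flow _ En) ?ltnS // big_ord_recl y0 mulr0 add0r.
by apply: eq_bigr => j _; rewrite !mxE (src_eq0 wfG).
Qed.

End HarmonicFunctions.

Lemma dirLap_tr G : (dirLap G)^T = dirLap G.
Proof. by apply/matrixP => i j; rewrite !mxE lap_sym. Qed.

Lemma dirLap_unit G x r : wf_tgraph G -> unit_potential G x r -> r != 0 ->
  - dirLap G \in unitmx.
Proof.
move=> wfG xG r_neq0; rewrite unitmxE unitfE; apply/negP => /det0P[v v_neq0].
rewrite mulmxN => /eqP; rewrite oppr_eq0 => /eqP vD.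
pose y u := \sum_(i < (nv G).-1) (i.+1 == u)%:R * v 0 i.
have y0 : y 0%N = 0 by rewrite /y big1 // => i _; rewrite mul0r.
have yS : \col_j y j.+1 = v^T.
  by apply/colP => j; rewrite !mxE -(sum_indicator (v 0) j).
have yG : forall u, (0 < u)%N -> (u < nv G)%N -> flow (edges G) y u = 0.
  case=> // k _ kn; rewrite -ltn_predRL in kn.
  have := congr1 trmx vD; rewrite trmx_mul dirLap_tr -yS (dirLap_col wfG y0).
  by move/colP/(_ (Ordinal kn)); rewrite !mxE.
have y_eq0 := harmonic_kernel wfG xG r_neq0 y0 yG.
move/negP: v_neq0; apply; apply/eqP/rowP => j.
move/colP: yS => /(_ j); rewrite !mxE => <-.
by rewrite y_eq0 // -ltn_predRL.
Qed.

Lemma H2sq_resistance G r : eff_resistance G r -> r != 0 -> H2sq G = r / 2%:R.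
Proof.
move=> [wfG [x xG]] r_neq0; pose X : 'cV[R]_(nv G).-1 := \col_j x j.+1.
have DX : dirLap G *m X = e_sink G.
  rewrite (dirLap_col wfG (potential_src xG)); apply/colP => i; rewrite !mxE.
  rewrite (src_eq0 wfG); have [i_snk|i_snk] := eqVneq (bump 0 i) (snk G).
    by rewrite -[i.+1]/(bump 0 i) i_snk (potential_snk_flow xG).
  by apply: (potential_harmonic xG); rewrite // -ltn_predRL.
have invD : invmx (- dirLap G) *m e_sink G = - X.
  by rewrite -DX -[_ *m X]opprK -mulNmx mulmxN mulKmx // (dirLap_unit wfG xG).
rewrite /H2sq -mulmxA invD mulmxN /mxtrace big_ord1 !mxE.
have snk_sum : \sum_(i < (nv G).-1) (i.+1 == snk G)%:R * x i.+1 = r.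
  rewrite -(potential_snk xG) -(@sum_indicator_nat _ (nv G).-1.+1 x (snk G)).
    by rewrite big_ord_recl (potential_src xG) mulr0 add0r.
  by rewrite (nv_predK wfG) (snk_lt wfG).
rewrite -snk_sum mulrN mulNr opprK mulrC.
by congr (_ * _); apply: eq_bigr => i _; rewrite !mxE (src_eq0 wfG).
Qed.

End Potential.

Section SeriesParallel.
Variable R : realFieldType.
Implicit Types (G : tgraph R) (y : nat -> R).

Lemma edge_resistance (w : R) : 0 < w -> eff_resistance (edge_graph w) w^-1.
Proof.
move=> w_gt0; have w_neq0 : w != 0 by rewrite lt0r_neq0.
split.
  split=> //; first by move=> e; rewrite inE => /eqP ->.
  by move=> y y0 y1 _ [|[|v]].
exists (fun u => (u == 1%N)%:R / w); split => //=.
- by rewrite mul0r.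
- by move=> [|[|v]].
- by rewrite /flow big_cons big_nil /=; field.
- by rewrite /flow big_cons big_nil /=; field.
- by rewrite mul1r.
Qed.

Section Series.
Variables (G1 G2 : tgraph R) (x1 x2 : nat -> R) (r1 r2 : R).
Hypotheses (wf1 : wf_tgraph G1) (wf2 : wf_tgraph G2).
Hypotheses (x1G : unit_potential G1 x1 r1) (x2G : unit_potential G2 x2 r2).
Hypotheses (r1_gt0 : 0 < r1) (r2_gt0 : 0 < r2).
Local Notation f := (ser_map G1 G2).
Let snk1_gt0 := snk_gt0 wf1.
Let snk1_lt := snk_lt wf1.
Let snk2_gt0 := snk_gt0 wf2.
Let snk2_lt := snk_lt wf2.
Let nv2_gt0 := nv_gt0 wf2.

Lemma ser_mapE v : f v = if v == 0%N then snk G1 else (nv G1 + v - 1)%N.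
Proof. by rewrite /ser_map (src_eq0 wf2); case: v. Qed.

Lemma ser_map_inj : injective f.
Proof. by move=> a b; rewrite !ser_mapE; do 2 case: eqVneq => ? //=; lia. Qed.

Lemma ser_map_ge a : (0 < a)%N -> (nv G1 <= f a)%N.
Proof. by rewrite ser_mapE; case: eqVneq => //= *; lia. Qed.

Lemma ser_map_lt a : (a < nv G2)%N -> (f a < nv G1 + nv G2 - 1)%N.
Proof. by rewrite ser_mapE; case: eqVneq => //= *; lia. Qed.

Lemma ser_map_neq v a : (v < nv G1)%N -> v != snk G1 -> f a != v.
Proof. by rewrite ser_mapE; case: (eqVneq a 0%N) => //= *; lia. Qed.

Definition ser_unmap v := (v - nv G1 + 1)%N.

Lemma ser_unmapK v : (nv G1 <= v)%N -> f (ser_unmap v) = v.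
Proof. by rewrite ser_mapE /ser_unmap; case: eqVneq => //= *; lia. Qed.

Lemma ser_mapK a : (0 < a)%N -> ser_unmap (f a) = a.
Proof. by rewrite ser_mapE /ser_unmap; case: eqVneq => //= *; lia. Qed.

Lemma ser_map0 : f 0%N = snk G1.
Proof. by rewrite ser_mapE. Qed.

Let E1_lt := edges_lt_nv wf1.
Let E2_lt := edges_lt_nv wf2.
Let f_inj : {in gtn (nv G2) &, injective f} := in2W ser_map_inj.

Lemma series_edges_lt : edges_lt (edges (series G1 G2)) (nv (series G1 G2)).
Proof. by apply: (edges_lt_glue E1_lt E2_lt) => /= [|a]; [lia | exact: ser_map_lt]. Qed.

Definition series_potential v :=
  if (v < nv G1)%N then x1 v else x2 (ser_unmap v) + r1.

Lemma flow_series_potential_l v : (v < nv G1)%N ->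
  flow (edges G1) series_potential v = flow (edges G1) x1 v.
Proof.
by move=> vn; apply: (eq_in_flow E1_lt) => // u un; rewrite /series_potential un.
Qed.

Lemma flow_series_potential_r w : (w < nv G2)%N ->
  flow (edges G2) (series_potential \o f) w = flow (edges G2) x2 w.
Proof.
move=> wn; rewrite -[RHS]mul1r; apply: (flow_affine_in (c := r1) E2_lt wn) => u un.
rewrite mul1r /series_potential /=; case: (eqVneq u 0%N) => [->|u0].
  by rewrite ser_map0 snk1_lt (potential_snk x1G) (potential_src x2G) add0r.
have u_gt0 : (0 < u)%N by rewrite lt0n.
by rewrite ifF ?ser_mapK //; have := ser_map_ge u_gt0; lia.
Qed.

Lemma series_unit_potential :
  unit_potential (series G1 G2) series_potential (r1 + r2).
Proof.
split=> /=.
- by rewrite /series_potential ifT ?(potential_src x1G) //; lia.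
- move=> v v0 /= vn v_snk; have [v1|v1] := ltnP v (nv G1).
    have [v_snk1|v_snk1] := eqVneq v (snk G1).
      rewrite v_snk1 (flow_glue _ E2_lt f_inj _ ser_map0 nv2_gt0).
      rewrite flow_series_potential_l // flow_series_potential_r //.
      by rewrite (potential_snk_flow x1G) (potential_src_flow x2G) subrr.
    rewrite (flow_glue_l _ E2_lt) => [|a _]; last exact: ser_map_neq.
    by rewrite flow_series_potential_l // (potential_harmonic x1G).
  have w_gt0 : (0 < ser_unmap v)%N by rewrite /ser_unmap addn1.
  have wn : (ser_unmap v < nv G2)%N by rewrite /ser_unmap; lia.
  rewrite -(ser_unmapK v1) (flow_glue_r E1_lt E2_lt f_inj _ wn (ser_map_ge w_gt0)).
  rewrite flow_series_potential_r // (potential_harmonic x2G) //.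
  by apply: contra_neq v_snk => <-; rewrite ser_unmapK.
- rewrite (flow_glue_r E1_lt E2_lt f_inj) ?ser_map_ge // flow_series_potential_r //.
  exact: (potential_snk_flow x2G).
- rewrite (flow_glue_l _ E2_lt) => [|a _]; last by apply: ser_map_neq; lia.
  by rewrite flow_series_potential_l ?(potential_src_flow x1G) //; lia.
- rewrite /series_potential ifF; last by have := ser_map_ge snk2_gt0; lia.
  by rewrite ser_mapK // (potential_snk x2G) addrC.
Qed.

Lemma series_harmonic_eq0 y : y 0%N = 0 -> y (f (snk G2)) = 0 ->
  harmonic (series G1 G2) y -> forall v, (v < nv G1 + nv G2 - 1)%N -> y v = 0.
Proof.
move=> y0 y_snk yG; set a := y (snk G1).
have snk_ge : (nv G1 <= f (snk G2))%N := ser_map_ge snk2_gt0.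
have y1 : harmonic G1 y.
  move=> v v0 vn v_snk1; rewrite -(yG v v0) /=; try lia.
  by rewrite (flow_glue_l _ E2_lt) // => b _; apply: ser_map_neq.
have y2 : harmonic G2 (y \o f).
  move=> w w0 wn w_snk2; have fw_ge := ser_map_ge w0.
  rewrite -(yG (f w)) /= ?(inj_eq ser_map_inj) ?ser_map_lt //; last by lia.
  by rewrite (flow_glue_r E1_lt E2_lt f_inj _ wn fw_ge).
have r1_neq0 : r1 != 0 by rewrite lt0r_neq0.
have r2_neq0 : r2 != 0 by rewrite lt0r_neq0.
have yE1 := harmonicE wf1 x1G r1_neq0 y1.
have yE2 := harmonicE wf2 x2G r2_neq0 y2.
rewrite /= ser_map0 y_snk -/a y0 subr0 in yE1 yE2.
(* the current balance at the junction t1 = s2 forces a (1/r1 + 1/r2) = 0 *)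
have a0 : a = 0.
  have : flow (edges (series G1 G2)) y (snk G1) = 0 by apply: yG => /=; lia.
  rewrite /= (flow_glue _ E2_lt f_inj _ ser_map0 nv2_gt0).
  rewrite (flow_affine_in E1_lt snk1_lt yE1) (flow_affine_in E2_lt nv2_gt0 yE2).
  rewrite (potential_snk_flow x1G) (potential_src_flow x2G) => /eqP.
  have inv_sum_gt0 : 0 < r1^-1 + r2^-1 by rewrite addr_gt0 ?invr_gt0.
  have -> : a / r1 * 1 + (0 - a) / r2 * -1 = a * (r1^-1 + r2^-1) by ring.
  by rewrite mulf_eq0 (gt_eqF inv_sum_gt0) orbF => /eqP.
move=> v vn; have [v1|v1] := ltnP v (nv G1).
  by rewrite yE1 // a0 !mul0r addr0.
have wn : (ser_unmap v < nv G2)%N by rewrite /ser_unmap; lia.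
by rewrite -(ser_unmapK v1) yE2 // a0 subrr !mul0r addr0.
Qed.

Lemma series_wf : wf_tgraph (series G1 G2).
Proof.
split=> //=; [exact: src_eq0 wf1 | | exact: ser_map_lt | exact: series_edges_lt |].
  by have := ser_map_ge snk2_gt0; lia.
exact: series_harmonic_eq0.
Qed.

End Series.

Section Parallel.
Variables (G1 G2 : tgraph R) (x1 x2 : nat -> R) (r1 r2 : R).
Hypotheses (wf1 : wf_tgraph G1) (wf2 : wf_tgraph G2).
Hypotheses (x1G : unit_potential G1 x1 r1) (x2G : unit_potential G2 x2 r2).
Local Notation f := (par_map G1 G2).
Let snk1_gt0 := snk_gt0 wf1.
Let snk1_lt := snk_lt wf1.
Let snk2_gt0 := snk_gt0 wf2.
Let snk2_lt := snk_lt wf2.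
Let E1_lt := edges_lt_nv wf1.
Let E2_lt := edges_lt_nv wf2.

Lemma par_mapE v : f v = if v == 0%N then 0%N else if v == snk G2 then snk G1
                         else (nv G1 + v - 1 - (snk G2 < v))%N.
Proof. by rewrite /par_map (src_eq0 wf1) (src_eq0 wf2); case: v. Qed.

Lemma par_map0 : f 0%N = 0%N.
Proof. by rewrite par_mapE. Qed.

Lemma par_map_snk : f (snk G2) = snk G1.
Proof. by rewrite par_mapE eqxx (gtn_eqF snk2_gt0). Qed.

Lemma par_map_inj : injective f.
Proof. by move=> a b; rewrite !par_mapE; repeat case: ifPn => ?; lia. Qed.

Lemma par_map_ge a : a != 0%N -> a != snk G2 -> (nv G1 <= f a)%N.
Proof. by move=> a0 a_snk; rewrite par_mapE (negbTE a0) (negbTE a_snk); lia. Qed.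

Lemma par_map_lt a : (a < nv G2)%N -> (f a < nv G1 + nv G2 - 2)%N.
Proof. by rewrite par_mapE; repeat case: ifPn => ?; lia. Qed.

Lemma par_map_neq v a : (0 < v)%N -> (v < nv G1)%N -> v != snk G1 -> f a != v.
Proof. by rewrite par_mapE; repeat case: ifPn => ?; lia. Qed.

Definition par_unmap v :=
  if (v - nv G1 + 1 < snk G2)%N then (v - nv G1 + 1)%N else (v - nv G1 + 2)%N.

Lemma par_unmap_spec v : (nv G1 <= v)%N -> (v < nv G1 + nv G2 - 2)%N ->
  [/\ f (par_unmap v) = v, par_unmap v != 0%N, par_unmap v != snk G2
    & (par_unmap v < nv G2)%N].
Proof.
move=> v1 vn; have w0 : par_unmap v != 0%N by rewrite /par_unmap; case: ifP; lia.
have w_snk : par_unmap v != snk G2 by rewrite /par_unmap; case: ifP; lia.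
split=> //; last by rewrite /par_unmap; case: ifP; lia.
by rewrite par_mapE (negbTE w0) (negbTE w_snk) /par_unmap; case: ifP; lia.
Qed.

Lemma par_mapK a : a != 0%N -> a != snk G2 -> par_unmap (f a) = a.
Proof.
move=> a0 a_snk; rewrite /par_unmap par_mapE (negbTE a0) (negbTE a_snk).
by case: ifP; lia.
Qed.

Let f_inj : {in gtn (nv G2) &, injective f} := in2W par_map_inj.

Lemma parallel_edges_lt : edges_lt (edges (parallel G1 G2)) (nv (parallel G1 G2)).
Proof. by apply: (edges_lt_glue E1_lt E2_lt) => /= [|a]; [lia | exact: par_map_lt]. Qed.

Lemma parallel_harmonic_eq0 y : y 0%N = 0 -> y (snk G1) = 0 ->
  harmonic (parallel G1 G2) y -> forall v, (v < nv G1 + nv G2 - 2)%N -> y v = 0.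
Proof.
move=> y0 y_snk yG.
have y1 : forall v, (v < nv G1)%N -> y v = 0.
  apply: (harmonic_eq0 wf1) => // v v0 vn v_snk1; rewrite -(yG v v0) //=; last by lia.
  by rewrite (flow_glue_l _ E2_lt) // => b _; apply: par_map_neq.
have y2 : forall w, (w < nv G2)%N -> y (f w) = 0.
  apply: (harmonic_eq0 wf2 (y := y \o f)); rewrite /= ?par_map0 ?par_map_snk //.
  move=> w w0 wn w_snk2; have fw_ge := par_map_ge (lt0n_neq0 w0) w_snk2.
  have fw_snk : f w != snk G1 by rewrite -par_map_snk (inj_eq par_map_inj).
  rewrite -(yG (f w)) /= ?par_map_lt //; try lia.
  by rewrite (flow_glue_r E1_lt E2_lt f_inj _ wn fw_ge).
move=> v vn; have [v1|v1] := ltnP v (nv G1); first exact: y1.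
by have [fv _ _ wn] := par_unmap_spec v1 vn; rewrite -fv y2.
Qed.

Lemma parallel_wf : wf_tgraph (parallel G1 G2).
Proof.
split=> //=; [exact: src_eq0 wf1 | lia | exact: parallel_edges_lt |].
exact: parallel_harmonic_eq0.
Qed.

Hypothesis r12_neq0 : r1 + r2 != 0.

(* The unit current splits as r2 / (r1 + r2) through G1 and r1 / (r1 + r2)
   through G2. *)
Definition parallel_potential v := if (v < nv G1)%N
  then r2 / (r1 + r2) * x1 v else r1 / (r1 + r2) * x2 (par_unmap v).

Lemma flow_parallel_potential_l v : (v < nv G1)%N ->
  flow (edges G1) parallel_potential v = r2 / (r1 + r2) * flow (edges G1) x1 v.
Proof.
move=> vn; apply: (flow_affine_in (c := 0) E1_lt vn) => u un.
by rewrite /parallel_potential un addr0.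
Qed.

Lemma flow_parallel_potential_r w : (w < nv G2)%N ->
  flow (edges G2) (parallel_potential \o f) w = r1 / (r1 + r2) * flow (edges G2) x2 w.
Proof.
move=> wn; apply: (flow_affine_in (c := 0) E2_lt wn) => u un.
rewrite addr0 /parallel_potential /=.
have [->|u0] := eqVneq u 0%N.
  by rewrite par_map0 ifT ?(potential_src x1G) ?(potential_src x2G) ?mulr0 //; lia.
have [->|u_snk] := eqVneq u (snk G2).
  by rewrite par_map_snk snk1_lt (potential_snk x1G) (potential_snk x2G); field.
by rewrite ifF ?par_mapK //; have := par_map_ge u0 u_snk; lia.
Qed.

Lemma parallel_unit_potential :
  unit_potential (parallel G1 G2) parallel_potential (psum r1 r2).
Proof.
split=> /=.
- by rewrite /parallel_potential ifT ?(potential_src x1G) ?mulr0 //; lia.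
- move=> v v0 /= vn v_snk; have [v1|v1] := ltnP v (nv G1).
    rewrite (flow_glue_l _ E2_lt) => [|a _]; last exact: par_map_neq.
    by rewrite flow_parallel_potential_l // (potential_harmonic x1G) // mulr0.
  have [fv w0 w_snk wn] := par_unmap_spec v1 vn.
  rewrite -fv (flow_glue_r E1_lt E2_lt f_inj _ wn (par_map_ge w0 w_snk)).
  by rewrite flow_parallel_potential_r // (potential_harmonic x2G) ?lt0n // mulr0.
- rewrite (flow_glue _ E2_lt f_inj _ par_map_snk snk2_lt).
  rewrite flow_parallel_potential_l // flow_parallel_potential_r //.
  by rewrite (potential_snk_flow x1G) (potential_snk_flow x2G); field.
- rewrite (flow_glue _ E2_lt f_inj _ par_map0 (nv_gt0 wf2)).
  rewrite flow_parallel_potential_l ?flow_parallel_potential_r; try lia.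
  by rewrite (potential_src_flow x1G) (potential_src_flow x2G); field.
- by rewrite /parallel_potential snk1_lt (potential_snk x1G) /psum; field.
Qed.

End Parallel.

Lemma series_resistance G1 G2 r1 r2 : eff_resistance G1 r1 -> eff_resistance G2 r2 ->
  0 < r1 -> 0 < r2 -> eff_resistance (series G1 G2) (r1 + r2).
Proof.
move=> [wf1 [x1 x1G]] [wf2 [x2 x2G]] r1_gt0 r2_gt0.
split; first exact: (series_wf wf1 wf2 x1G x2G r1_gt0 r2_gt0).
by exists (series_potential G1 x1 x2 r1); apply: series_unit_potential.
Qed.

Lemma parallel_resistance G1 G2 r1 r2 : eff_resistance G1 r1 -> eff_resistance G2 r2 ->
  r1 + r2 != 0 -> eff_resistance (parallel G1 G2) (psum r1 r2).
Proof.
move=> [wf1 [x1 x1G]] [wf2 [x2 x2G]] r12_neq0.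
split; first exact: (parallel_wf wf1 wf2).
by exists (parallel_potential G1 G2 x1 x2 r1 r2); apply: parallel_unit_potential.
Qed.

Lemma psum_gt0 (a b : R) : 0 < a -> 0 < b -> 0 < psum a b.
Proof. by move=> a_gt0 b_gt0; rewrite divr_gt0 ?mulr_gt0 ?addr_gt0. Qed.

Lemma ttsp_resistance G : ttsp G -> exists2 r, 0 < r & eff_resistance G r.
Proof.
elim=> {G} [w w_gt0 | G1 G2 _ [r1 r1_gt0 G1r] _ [r2 r2_gt0 G2r]
                    | G1 G2 _ [r1 r1_gt0 G1r] _ [r2 r2_gt0 G2r]].
- by exists w^-1; [rewrite invr_gt0 | exact: edge_resistance].
- by exists (r1 + r2); [exact: addr_gt0 | exact: series_resistance].
- exists (psum r1 r2); first exact: psum_gt0.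
  by apply: parallel_resistance; rewrite // gt_eqF ?addr_gt0.
Qed.

End SeriesParallel.

Theorem theorem3 (R : realFieldType) (G1 G2 : tgraph R) :
  ttsp G1 -> ttsp G2 ->
  H2sq (series G1 G2) = H2sq G1 + H2sq G2 /\
  H2sq (parallel G1 G2) = psum (H2sq G1) (H2sq G2).
Proof.
move=> /ttsp_resistance[r1 r1_gt0 G1r] /ttsp_resistance[r2 r2_gt0 G2r].
have r1_neq0 : r1 != 0 by rewrite gt_eqF.
have r2_neq0 : r2 != 0 by rewrite gt_eqF.
have r12_neq0 : r1 + r2 != 0 by rewrite gt_eqF ?addr_gt0.
rewrite (H2sq_resistance G1r) // (H2sq_resistance G2r) //.
rewrite (H2sq_resistance (series_resistance G1r G2r r1_gt0 r2_gt0)) //.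
rewrite (H2sq_resistance (parallel_resistance G1r G2r r12_neq0)); last first.
  by rewrite gt_eqF ?psum_gt0.
by rewrite /psum; split; field.
Qed.
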